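(* Let $T\in B(\mathcal{F})$ be a block-diagonal operator. If the block-diagonal operator $T-\sum_{i=1}^d R_iTR_i^*$ belongs to $\mathcal{S}$, then $T\in\mathcal{C}=C^*(L_1,\ldots,L_d)$.
   Context: $d\ge2$; $\xi_1,\ldots,\xi_d$ is the standard orthonormal basis of $\mathbb{C}^d$. $\mathcal{F}=\bigoplus_{n\ge0}\mathcal{F}_n$ is the full Fock space, $\mathcal{F}_0=\mathbb{C}\Omega$, $\mathcal{F}_n=(\mathbb{C}^d)^{\otimes n}$ with the usual inner product. $L_j\eta=\xi_j\otimes\eta$, $R_j\eta=\eta\otimes\xi_j$ (with $L_j\Omega=R_j\Omega=\xi_j$). $T$ is block-diagonal if $T(\mathcal{F}_n)\subseteq\mathcal{F}_n$ for all $n$. $\mathcal{S}$ is the set of operators $S\in B(\mathcal{F})$ which are band-limited (there is $b\ge0$ with $S(\mathcal{F}_n)\subseteq\bigoplus_{|m-n|\le b}\mathcal{F}_m$ for all $n$) and summable ($\sum_{n\ge0}\|S|_{\mathcal{F}_n}\|<\infty$). *)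

From HB Require Import structures.
From mathcomp Require Import all_boot all_order all_algebra.
From mathcomp Require Import reals.
From mathcomp Require Import complex.
Set Implicit Arguments. Unset Strict Implicit. Unset Printing Implicit Defensive.
Import Order.TTheory GRing.Theory Num.Theory.
Local Open Scope ring_scope.

(* Words over {0,..,d-1}; the word w of length n stands for the basis vector
   xi_{w_1} (x) ... (x) xi_{w_n} of F_n; the empty word stands for Omega.
   A vector of the Fock space is a coefficient function on words that is
   square-summable; an operator is a map on coefficient functions, of which
   only the restriction to square-summable functions matters. *)
Definition word (d : nat) := seq 'I_d.
Definition vec (R : realType) (d : nat) := word d -> R[i].
Definition op (R : realType) (d : nat) := vec R d -> vec R d.

Definition sqmod (R : realType) (z : R[i]) : R := complex.Re z ^+ 2 + complex.Im z ^+ 2.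

Definition level_sq (R : realType) (d : nat) (f : vec R d) (n : nat) : R :=
  \sum_(t : n.-tuple 'I_d) sqmod (f (tval t)).

Definition psum (R : realType) (d : nat) (f : vec R d) (N : nat) : R :=
  \sum_(n < N) level_sq f n.

Definition in_l2 (R : realType) (d : nat) (f : vec R d) : Prop :=
  exists M : R, forall N, psum f N <= M.

(* ||g|| <= c * ||f||  (for c >= 0), stated via upper bounds of ||f||^2 *)
Definition norm_le (R : realType) (d : nat) (g : vec R d) (c : R) (f : vec R d)
  : Prop :=
  forall M : R, (forall N, psum f N <= M) -> forall N, psum g N <= c ^+ 2 * M.

Definition supported_in (R : realType) (d : nat) (n : nat) (f : vec R d) : Prop :=
  forall w : word d, size w != n -> f w = 0.

(* L_i eta = xi_i (x) eta *)
Definition Lop (R : realType) (d : nat) (i : 'I_d) : op R d :=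
  fun f w => match w with
             | j :: w' => if j == i then f w' else 0
             | [::] => 0
             end.
Definition Lop_adj (R : realType) (d : nat) (i : 'I_d) : op R d :=
  fun f w => f (i :: w).
(* R_i eta = eta (x) xi_i *)
Definition Rop (R : realType) (d : nat) (i : 'I_d) : op R d :=
  fun f w => if (0 < size w)%N && (last i w == i) then f (take (size w).-1 w)
             else 0.
Definition Rop_adj (R : realType) (d : nat) (i : 'I_d) : op R d :=
  fun f w => f (rcons w i).

Definition op_add (R : realType) (d : nat) (A B : op R d) : op R d :=
  fun f w => A f w + B f w.
Definition op_sub (R : realType) (d : nat) (A B : op R d) : op R d :=
  fun f w => A f w - B f w.
Definition op_scale (R : realType) (d : nat) (a : R[i]) (A : op R d) : op R d :=
  fun f w => a * A f w.
Definition op_mul (R : realType) (d : nat) (A B : op R d) : op R d :=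
  fun f => A (B f).

Definition vadd (R : realType) (d : nat) (f g : vec R d) : vec R d :=
  fun w => f w + g w.
Definition vscale (R : realType) (d : nat) (a : R[i]) (f : vec R d) : vec R d :=
  fun w => a * f w.

Definition bounded_op (R : realType) (d : nat) (T : op R d) : Prop :=
  [/\ (forall f g, in_l2 f -> in_l2 g -> T (vadd f g) = vadd (T f) (T g)),
      (forall a f, in_l2 f -> T (vscale a f) = vscale a (T f)) &
      exists c : R, 0 <= c /\ forall f, in_l2 f -> norm_le (T f) c f].

Definition block_diagonal (R : realType) (d : nat) (T : op R d) : Prop :=
  forall n f, in_l2 f -> supported_in n f -> supported_in n (T f).

Definition band_limited (R : realType) (d : nat) (S : op R d) : Prop :=
  exists b : nat, forall n f, in_l2 f -> supported_in n f ->
    forall w, S f w != 0 -> (n <= size w + b)%N && (size w <= n + b)%N.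

(* sum_n ||S|_{F_n}|| < oo : there are bounds c n >= ||S|_{F_n}|| with
   bounded partial sums *)
Definition summable_blocks (R : realType) (d : nat) (S : op R d) : Prop :=
  exists c : nat -> R,
    [/\ (forall n, 0 <= c n),
        (exists M : R, forall N, \sum_(n < N) c n <= M) &
        forall n f, in_l2 f -> supported_in n f -> norm_le (S f) (c n) f].

Definition in_classS (R : realType) (d : nat) (S : op R d) : Prop :=
  [/\ bounded_op S, band_limited S & summable_blocks S].

(* the unital algebra generated by L_1..L_d and L_1^*..L_d^*  (it is
   *-closed, so its norm closure is C^*(L_1,...,L_d)) *)
Inductive Lpoly (R : realType) (d : nat) : op R d -> Prop :=
| LP_L i : Lpoly (Lop i)
| LP_Ladj i : Lpoly (Lop_adj i)
| LP_id : Lpoly (fun f => f)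
| LP_add A B : Lpoly A -> Lpoly B -> Lpoly (op_add A B)
| LP_scale a A : Lpoly A -> Lpoly (op_scale a A)
| LP_mul A B : Lpoly A -> Lpoly B -> Lpoly (op_mul A B).

Definition in_C (R : realType) (d : nat) (T : op R d) : Prop :=
  forall eps : R, 0 < eps ->
    exists A, Lpoly A /\ forall f, in_l2 f -> norm_le (op_sub T A f) eps f.

Definition defect (R : realType) (d : nat) (T : op R d) : op R d :=
  fun f w => T f w - \sum_(i < d) Rop i (T (Rop_adj i f)) w.

From HB Require Import structures.
From mathcomp Require Import all_boot all_order all_algebra.
From mathcomp Require Import reals complex.
From mathcomp Require Import ring lra.
From Stdlib Require Import FunctionalExtensionality.
Set Implicit Arguments. Unset Strict Implicit. Unset Printing Implicit Defensive.
Import Order.TTheory GRing.Theory Num.Theory.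
Local Open Scope ring_scope.

(* Put S := T - sum_i R_i T R_i^*.  Unfolding T = S + sum_i R_i T R_i^* along
   the letters of a word w telescopes to T = sum_k X_k, where X_k acts on the
   tensor product F_k (x) F_(n-k) as S|_(F_k) (x) id.  Since S is block-diagonal,
   X_k = sum_(|u| = |v| = k) <S xi_v, xi_u> L_u L_v^* lies in the algebra
   generated by the L_i, and ||X_k|| <= ||S|_(F_k)||.  Summability of these
   norms makes the partial sums sum_(k < N) X_k converge to T in norm; the
   triangle inequality for the blocks is obtained from a weighted
   Cauchy-Schwarz inequality. *)

Section TupleSums.
Variables (V : nmodType) (I : finType).

Lemma big_tuple_cons n (F : seq I -> V) :
  \sum_(t : n.+1.-tuple I) F t = \sum_(i : I) \sum_(t : n.-tuple I) F (i :: t).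
Proof.
rewrite pair_big /= (reindex (fun p : I * n.-tuple I => [tuple of p.1 :: p.2])) //=.
exists (fun t : n.+1.-tuple I => (thead t, behead_tuple t)) => [[i t] _|t _] /=.
  by rewrite theadE; congr pair; apply: val_inj.
by rewrite [RHS]tuple_eta.
Qed.

Lemma big_tuple_cat m k (F : seq I -> V) :
  \sum_(t : (m + k).-tuple I) F t =
  \sum_(t1 : m.-tuple I) \sum_(t2 : k.-tuple I) F (t1 ++ t2).
Proof.
elim: m F => [|m IH] F.
  rewrite (big_pred1 [tuple]) // => t.
  by rewrite [t]tuple0; apply/esym/eqP.
rewrite (@big_tuple_cons (m + k)).
under eq_bigr => i _ do rewrite (IH (fun s => F (i :: s))).
by rewrite (@big_tuple_cons m (fun s => \sum_(t2 : k.-tuple I) F (s ++ t2))).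
Qed.

End TupleSums.

Section RealFacts.
Variable R : realType.

Lemma series_tail_small (a : nat -> R) (M : R) :
  (forall n, 0 <= a n) -> (forall N, \sum_(n < N) a n <= M) ->
  forall e, 0 < e -> exists N, forall N1 N2, (N <= N1)%N ->
    \sum_(N1 <= n < N2) a n <= e.
Proof.
move=> a_ge0 a_bd e e_gt0.
pose E : R -> Prop := fun x => exists N : nat, x = \sum_(n < N) a n.
have E_sup : classical_sets.has_sup E.
  split; first by exists (\sum_(n < 0) a n); exists 0%N.
  by exists M => x [N ->].
have [_ [N ->] N_adh] := sup_adherent e_gt0 E_sup.
have tail_N N2 : \sum_(N <= n < N2) a n <= e.
  have [NN2|N2N] := leqP N N2; last by rewrite big_geq ?(ltnW N2N) ?ltW.
  have : \sum_(n < N2) a n <= sup E by apply: sup_upper_bound => //; exists N2.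
  by rewrite -(big_mkord xpredT) (big_cat_nat _ (n := N)) //= big_mkord; lra.
exists N => N1 N2 NN1; apply: le_trans (tail_N N2).
rewrite (@big_nat_widenl _ _ _ N1 N) // big_mkcond /=.
by apply: ler_sum_nat => n _; case: ifP.
Qed.

Lemma le0_of_le_mul_eps (x c : R) :
  0 <= c -> (forall e, 0 < e -> x <= c * e) -> x <= 0.
Proof.
move=> c_ge0 x_le; apply/ler_addgt0Pr => e e_gt0; rewrite add0r.
have c1_gt0 : 0 < c + 1 by rewrite ltr_wpDl.
apply: le_trans (x_le _ (divr_gt0 e_gt0 c1_gt0)) _.
rewrite mulrA ler_pdivrMr //; nra.
Qed.

Lemma cauchy_schwarz_step (x X a A Q : R) :
  0 <= a -> 0 <= A -> 0 <= Q -> (a = 0 -> x = 0) -> X ^+ 2 <= A * Q ->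
  (x + X) ^+ 2 <= (a + A) * (x ^+ 2 / a + Q).
Proof.
move=> a_ge0 A_ge0 Q_ge0 ax XAQ.
have [a0|a_neq0] := eqVneq a 0.
  by rewrite a0 (ax a0) expr0n /= !(mul0r, add0r).
have a_gt0 : 0 < a by rewrite lt_def a_neq0.
have [q ->] : exists q, x = a * q by exists (x / a); field.
have -> : (a * q) ^+ 2 / a = a * q ^+ 2 by field.
suff : 2 * q * X <= Q + A * q ^+ 2 by nra.
have [A0|A_neq0] := eqVneq A 0.
  move: XAQ; rewrite A0 mul0r => X2_le0.
  have -> : X = 0 by apply/eqP; rewrite -sqrf_eq0 eq_le X2_le0 sqr_ge0.
  by rewrite mulr0 mul0r addr0.
have A_gt0 : 0 < A by rewrite lt_def A_neq0.
(* A (Q + A q^2 - 2 q X) = (A Q - X^2) + (A q - X)^2 *)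
have sq_ge0 := sqr_ge0 (A * q - X).
rewrite -(ler_pM2l A_gt0); nra.
Qed.

(* A term with [a i = 0] is read as [x i ^+ 2 / 0 = 0], which the second
   hypothesis makes harmless. *)
Lemma sqr_sum_le_weighted (I : Type) (r : seq I) (P : pred I) (a x : I -> R) :
  (forall i, P i -> 0 <= a i) -> (forall i, P i -> a i = 0 -> x i = 0) ->
  (\sum_(i <- r | P i) x i) ^+ 2 <=
  (\sum_(i <- r | P i) a i) * \sum_(i <- r | P i) x i ^+ 2 / a i.
Proof.
move=> a_ge0 ax; elim: r => [|i r IH]; first by rewrite !big_nil expr0n /= mul0r.
rewrite !big_cons; case: ifP => // Pi; apply: cauchy_schwarz_step; auto.
- by apply: sumr_ge0 => j /a_ge0.
- by apply: sumr_ge0 => j Pj; rewrite divr_ge0 ?sqr_ge0 ?a_ge0.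
Qed.

Lemma sqmod_ge0 (z : R[i]) : 0 <= sqmod z.
Proof. by rewrite addr_ge0 // sqr_ge0. Qed.

Lemma sqmod0 : sqmod (0 : R[i]) = 0.
Proof. by rewrite /sqmod /= expr0n /= addr0. Qed.

Lemma sqmod_eq0 (z : R[i]) : sqmod z = 0 -> z = 0.
Proof.
case: z => a b; rewrite /sqmod /= => /eqP.
by rewrite paddr_eq0 ?sqr_ge0 // !sqrf_eq0 => /andP[/eqP-> /eqP->].
Qed.

Lemma sqmod_sum_le_weighted (I : Type) (r : seq I) (P : pred I)
    (a : I -> R) (y : I -> R[i]) :
  (forall i, P i -> 0 <= a i) -> (forall i, P i -> a i = 0 -> y i = 0) ->
  sqmod (\sum_(i <- r | P i) y i) <=
  (\sum_(i <- r | P i) a i) * \sum_(i <- r | P i) sqmod (y i) / a i.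
Proof.
move=> a_ge0 ay; rewrite /sqmod.
rewrite (raddf_sum (@complex.Re R : Rcomplex R -> R)).
rewrite (raddf_sum (@complex.Im R : Rcomplex R -> R)).
under [X in _ <= _ * X]eq_bigr => i _ do rewrite mulrDl.
rewrite big_split mulrDr /=.
by apply: lerD; apply: sqr_sum_le_weighted => // i Pi /(ay i Pi) ->.
Qed.

End RealFacts.

Section FockVectors.
Variables (R : realType) (d : nat).
Implicit Types (f g h : vec R d) (u v w : word d).

Definition vrestr (p : pred nat) g : vec R d :=
  fun x => if p (size x) then g x else 0.
Definition vshift v f : vec R d := fun x => f (x ++ v).
Definition vdelta v : vec R d := fun x => if x == v then 1 else 0.

Lemma level_sq_ge0 f n : 0 <= level_sq f n.
Proof. by apply: sumr_ge0 => t _; apply: sqmod_ge0. Qed.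

Lemma psum_ge0 f N : 0 <= psum f N.
Proof. by apply: sumr_ge0 => n _; apply: level_sq_ge0. Qed.

Lemma psum_mono f N1 N2 : (N1 <= N2)%N -> psum f N1 <= psum f N2.
Proof.
move=> N12; rewrite /psum -!(big_mkord xpredT (level_sq f)).
by rewrite [leRHS](@big_cat_nat _ _ _ N1) //= lerDl sumr_ge0 // => n _; apply: level_sq_ge0.
Qed.

Lemma sqmod_le_level_sq h u : sqmod (h u) <= level_sq h (size u).
Proof.
rewrite /level_sq (bigD1 (Tuple (eqxx (size u)))) //= lerDl.
by apply: sumr_ge0 => t _; apply: sqmod_ge0.
Qed.

Lemma level_sq_le_psum h n N : (n < N)%N -> level_sq h n <= psum h N.
Proof.
move=> nN; rewrite /psum (bigD1 (Ordinal nN)) //= lerDl.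
by apply: sumr_ge0 => k _; apply: level_sq_ge0.
Qed.

Lemma sqmod_le_psum h u N : (size u < N)%N -> sqmod (h u) <= psum h N.
Proof. by move=> uN; apply: le_trans (sqmod_le_level_sq h u) (level_sq_le_psum h uN). Qed.

Lemma level_sq_vrestr p g n :
  level_sq (vrestr p g) n = if p n then level_sq g n else 0.
Proof.
rewrite /level_sq /vrestr; case: ifP => pn.
  by apply: eq_bigr => t _; rewrite size_tuple pn.
by rewrite big1 // => t _; rewrite size_tuple pn sqmod0.
Qed.

Lemma psum_vrestr p g N : psum (vrestr p g) N = \sum_(n < N | p n) level_sq g n.
Proof.
by rewrite /psum [RHS]big_mkcond; apply: eq_bigr => n _; rewrite level_sq_vrestr.
Qed.

Lemma in_l2_vrestr p g : in_l2 g -> in_l2 (vrestr p g).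
Proof.
move=> [M g_bd]; exists M => N; apply: le_trans (g_bd N).
rewrite psum_vrestr /psum big_mkcond.
by apply: ler_sum => n _; case: ifP => // _; apply: level_sq_ge0.
Qed.

Lemma vrestrC p g : vadd (vrestr p g) (vrestr (predC p) g) = g.
Proof.
by apply: functional_extensionality => x; rewrite /vadd /vrestr /=; case: (p _);
  rewrite ?addr0 ?add0r.
Qed.

Lemma supported_vrestr k g : supported_in k (vrestr (pred1 k) g).
Proof. by move=> w wk; rewrite /vrestr /= (negbTE wk). Qed.

Lemma supported_vdelta v : supported_in (size v) (vdelta v).
Proof. by move=> w wv; rewrite /vdelta; case: eqP => // e; rewrite e eqxx in wv. Qed.

Lemma supported_vscale k a f : supported_in k f -> supported_in k (vscale a f).
Proof. by move=> fk w wk; rewrite /vscale fk // mulr0. Qed.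

Lemma level_sq_supported k h n :
  supported_in k h -> n != k -> level_sq h n = 0.
Proof.
by move=> hk nk; rewrite /level_sq big1 // => t _; rewrite hk ?sqmod0 ?size_tuple.
Qed.

Lemma psum_supported_le k h N : supported_in k h -> psum h N <= level_sq h k.
Proof.
move=> hk; have [kN|Nk] := ltnP k N.
  rewrite /psum (bigD1 (Ordinal kN)) //= big1 ?addr0 // => n nk.
  by apply: level_sq_supported hk _; apply: contraNneq nk => e; apply/eqP/val_inj.
rewrite /psum big1 ?level_sq_ge0 // => n _; apply: level_sq_supported hk _.
by rewrite neq_ltn (leq_trans (ltn_ord n) Nk).
Qed.

Lemma in_l2_supported k h : supported_in k h -> in_l2 h.
Proof. by move=> hk; exists (level_sq h k) => N; apply: psum_supported_le. Qed.

Lemma vshift0 f : vshift [::] f = f.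
Proof. by apply: functional_extensionality => x; rewrite /vshift cats0. Qed.

Lemma level_sq_vshift v f n : level_sq (vshift v f) n <= level_sq f (n + size v).
Proof.
rewrite /level_sq (@big_tuple_cat _ _ n (size v) (fun s => sqmod (f s))).
apply: ler_sum => t _; rewrite (bigD1 (Tuple (eqxx (size v)))) //= lerDl.
by apply: sumr_ge0 => t' _; apply: sqmod_ge0.
Qed.

Lemma psum_vshift v f N : psum (vshift v f) N <= psum f (N + size v).
Proof.
apply: le_trans (_ : \sum_(n < N) level_sq f (n + size v) <= _).
  by apply: ler_sum => n _; apply: level_sq_vshift.
rewrite /psum -(big_mkord xpredT (fun n => level_sq f (n + size v))).
rewrite -(big_mkord xpredT (level_sq f)) [leRHS](@big_cat_nat _ _ _ (size v)) ?leq_addl //=.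
rewrite [X in _ <= _ + X](_ : _ = \sum_(0 <= n < N) level_sq f (n + size v)).
  by rewrite lerDr; apply: sumr_ge0 => n _; apply: level_sq_ge0.
by rewrite -{1}(add0n (size v)) big_addn addnK.
Qed.

Lemma supported_basis_sum k (r : seq (k.-tuple 'I_d)) g :
  supported_in k (fun x => \sum_(v <- r) g v * vdelta v x).
Proof.
move=> x xk; rewrite big1 // => v _.
by rewrite (@supported_vdelta v x) ?mulr0 ?size_tuple.
Qed.

Lemma vrestr_basis k g :
  vrestr (pred1 k) g = fun x => \sum_(v : k.-tuple 'I_d) g v * vdelta v x.
Proof.
apply: functional_extensionality => x; rewrite /vrestr /=.
have [xk|xk] := eqVneq (size x) k; last by rewrite (supported_basis_sum _ _ xk).
rewrite (bigD1 (Tuple (introT eqP xk))) //= /vdelta eqxx mulr1 big1 ?addr0 // => v vx.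
case: eqP => [e|]; rewrite ?mulr0 //.
by case/eqP: vx; apply: val_inj; rewrite /= e.
Qed.

Lemma in_l2_vshift v f : in_l2 f -> in_l2 (vshift v f).
Proof.
by move=> [M f_bd]; exists M => N; apply: le_trans (psum_vshift v f N) (f_bd _).
Qed.

Lemma psum_sum_le (I : finType) (P : pred I) g (Y : I -> vec R d) (a : I -> R) M N :
  (forall i, 0 <= a i) ->
  (forall w, (size w < N)%N -> g w = \sum_(i | P i) Y i w) ->
  (forall i, P i -> psum (Y i) N <= a i ^+ 2 * M) ->
  psum g N <= (\sum_(i | P i) a i) ^+ 2 * M.
Proof.
move=> a_ge0 g_eq Y_bd; set A := \sum_(i | P i) a i.
have A_ge0 : 0 <= A by apply: sumr_ge0.
have Y_eq0 i w : P i -> a i = 0 -> (size w < N)%N -> Y i w = 0.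
  move=> Pi ai0 wN; apply/sqmod_eq0/eqP; rewrite eq_le sqmod_ge0 andbT.
  apply: le_trans (sqmod_le_psum _ wN) _.
  by apply: le_trans (Y_bd i Pi) _; rewrite ai0 expr0n /= mul0r.
apply: le_trans (_ : _ <= \sum_(n < N) \sum_(t : n.-tuple 'I_d)
    A * \sum_(i | P i) sqmod (Y i t) / a i) _.
  apply: ler_sum => n _; apply: ler_sum => t _.
  rewrite g_eq ?size_tuple //; apply: sqmod_sum_le_weighted => // i Pi ai0.
  by rewrite Y_eq0 ?size_tuple.
have -> : \sum_(n < N) \sum_(t : n.-tuple 'I_d) A * \sum_(i | P i) sqmod (Y i t) / a i
    = A * \sum_(i | P i) psum (Y i) N / a i.
  under eq_bigr => n _ do rewrite -mulr_sumr exchange_big /=.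
  rewrite -mulr_sumr exchange_big /=; congr (A * _); apply: eq_bigr => i Pi.
  by rewrite /psum mulr_suml; apply: eq_bigr => n _; rewrite /level_sq mulr_suml.
apply: le_trans (ler_wpM2l A_ge0 (_ : _ <= \sum_(i | P i) a i * M)) _.
  apply: ler_sum => i Pi; have [->|ai_neq0] := eqVneq (a i) 0.
    by rewrite invr0 mulr0 mul0r.
  rewrite ler_pdivrMr ?lt_def ?ai_neq0 ?a_ge0 //.
  by apply: le_trans (Y_bd i Pi) _; rewrite expr2 mulrAC.
by rewrite -mulr_suml mulrA expr2.
Qed.

End FockVectors.

Section LAlgebra.
Variables (R : realType) (d : nat).
Implicit Types (f : vec R d) (u v w : word d).

Definition Lword u : op R d := foldr (fun i A => op_mul (Lop i) A) id u.
Definition Lword_adj v : op R d := foldr (fun i A => op_mul A (Lop_adj i)) id v.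

Lemma Lword_apply u f w :
  Lword u f w = if take (size u) w == u then f (drop (size u) w) else 0.
Proof.
elim: u w => [|i u IH] w /=; first by rewrite take0 drop0.
case: w => [|j w] //=.
by rewrite /op_mul /Lop IH eqseq_cons; case: (j == i).
Qed.

Lemma Lword_adj_apply v f w : Lword_adj v f w = f (v ++ w).
Proof. by elim: v f => [|i v IH] f //=; rewrite /op_mul IH. Qed.

Lemma Lpoly_Lword u : Lpoly (Lword u).
Proof. by elim: u => [|i u IH]; [apply: LP_id | apply: LP_mul (LP_L _ _) IH]. Qed.

Lemma Lpoly_Lword_adj v : Lpoly (Lword_adj v).
Proof. by elim: v => [|i v IH]; [apply: LP_id | apply: LP_mul IH (LP_Ladj _ _)]. Qed.

Definition op_sum (I : Type) (r : seq I) (F : I -> op R d) : op R d :=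
  foldr (fun i A => op_add (F i) A) (op_scale 0 id) r.

Lemma op_sum_apply (I : Type) (r : seq I) (F : I -> op R d) f w :
  op_sum r F f w = \sum_(i <- r) F i f w.
Proof.
elim: r => [|i r IH]; first by rewrite big_nil /= /op_scale mul0r.
by rewrite big_cons /= /op_add IH.
Qed.

Lemma Lpoly_op_sum (I : Type) (r : seq I) (F : I -> op R d) :
  (forall i, Lpoly (F i)) -> Lpoly (op_sum r F).
Proof.
by move=> F_L; elim: r => [|i r IH]; [apply/LP_scale/LP_id | apply: LP_add].
Qed.

(* The ampliation S|_(F_k) (x) id on F_k (x) F_(n-k), written through the L_i. *)
Definition ampl (S : op R d) k : op R d :=
  op_sum (index_enum (k.-tuple 'I_d * k.-tuple 'I_d)%type)
    (fun p => op_scale (S (vdelta R p.2) p.1) (op_mul (Lword p.1) (Lword_adj p.2))).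

Lemma Lpoly_ampl S k : Lpoly (ampl S k).
Proof.
apply: Lpoly_op_sum => p.
exact: LP_scale (LP_mul (Lpoly_Lword _) (Lpoly_Lword_adj _)).
Qed.

Lemma ampl_apply S k f w :
  ampl S k f w = if (k <= size w)%N
    then \sum_(v : k.-tuple 'I_d) S (vdelta R v) (take k w) * f (v ++ drop k w)
    else 0.
Proof.
rewrite /ampl op_sum_apply /op_scale /op_mul.
rewrite -(pair_bigA _ (fun u v : k.-tuple 'I_d =>
  S (vdelta R v) u * (Lword u (Lword_adj v f) w))) /=.
under eq_bigr => u _ do under eq_bigr => v _ do
  rewrite Lword_apply Lword_adj_apply size_tuple.
case: leqP => kw.
  have take_k : size (take k w) == k by rewrite size_takel.
  rewrite (bigD1 (Tuple take_k)) //= [X in _ + X]big1 ?addr0.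
    by apply: eq_bigr => v _; rewrite eqxx.
  move=> u uw; apply: big1 => v _; case: eqP => [e|]; rewrite ?mulr0 //.
  by case/eqP: uw; apply: val_inj; rewrite /= e.
apply: big1 => u _; apply: big1 => v _; case: eqP => [e|]; rewrite ?mulr0 //.
move/(congr1 size): e; rewrite size_tuple take_oversize ?(ltnW kw) // => wk.
by rewrite wk ltnn in kw.
Qed.

End LAlgebra.

Section BoundedOperators.
Variables (R : realType) (d : nat) (S : op R d).
Hypothesis S_bounded : bounded_op S.
Implicit Types (f g : vec R d) (u : word d).

Lemma op_vadd f g : in_l2 f -> in_l2 g -> S (vadd f g) = vadd (S f) (S g).
Proof. by case: S_bounded => S_add _ _; apply: S_add. Qed.

Lemma op_vscale a f : in_l2 f -> S (vscale a f) = vscale a (S f).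
Proof. by case: S_bounded => _ S_scale _; apply: S_scale. Qed.

Lemma op_vzero : S (fun _ => 0) = fun _ => 0.
Proof.
have zero_l2 : in_l2 (fun _ : word d => 0 : R[i]) by apply: (@in_l2_supported _ _ 0).
have -> : (fun _ => 0) = vscale 0 (fun _ : word d => 0 : R[i]).
  by apply: functional_extensionality => x; rewrite /vscale mul0r.
by rewrite op_vscale //; apply: functional_extensionality => x; rewrite /vscale !mul0r.
Qed.

Lemma op_basis_sum k (r : seq (k.-tuple 'I_d)) g u :
  S (fun x => \sum_(v <- r) g v * vdelta R v x) u =
  \sum_(v <- r) g v * S (vdelta R v) u.
Proof.
elim: r => [|v r IH].
  rewrite big_nil -[RHS]/((fun _ : word d => 0 : R[i]) u) -op_vzero.
  by congr S; apply: functional_extensionality => x; rewrite big_nil.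
have -> : (fun x => \sum_(v' <- v :: r) g v' * vdelta R v' x) =
    vadd (vscale (g v) (vdelta R v)) (fun x => \sum_(v' <- r) g v' * vdelta R v' x).
  by apply: functional_extensionality => x; rewrite big_cons.
rewrite big_cons op_vadd.
- by rewrite /vadd IH op_vscale //; apply: in_l2_supported (@supported_vdelta R _ v).
- exact: in_l2_supported (supported_vscale (g v) (@supported_vdelta R _ v)).
- exact: in_l2_supported (supported_basis_sum r g).
Qed.

Lemma op_vrestr_basis k g u :
  S (vrestr (pred1 k) g) u = \sum_(v : k.-tuple 'I_d) g v * S (vdelta R v) u.
Proof. by rewrite vrestr_basis op_basis_sum. Qed.

Hypothesis S_block : block_diagonal S.

Lemma op_vrestr_lt N g u : in_l2 g ->
  S (vrestr (fun n => (n < N)%N) g) u =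
  if (size u < N)%N then S (vrestr (pred1 (size u)) g) u else 0.
Proof.
move=> g_l2; elim: N => [|N IH].
  have -> : vrestr (fun n => (n < 0)%N) g = fun _ => 0 by [].
  by rewrite op_vzero.
have -> : vrestr (fun n => (n < N.+1)%N) g =
    vadd (vrestr (fun n => (n < N)%N) g) (vrestr (pred1 N) g).
  apply: functional_extensionality => x; rewrite /vadd /vrestr /= ltnS leq_eqVlt.
  by case: ltngtP; rewrite ?addr0 ?add0r.
rewrite op_vadd /vadd; try exact: in_l2_vrestr.
have off_level : size u != N -> S (vrestr (pred1 N) g) u = 0.
  exact: S_block (in_l2_vrestr _ g_l2) (@supported_vrestr _ _ N g) u.
rewrite IH ltnS; have [uN|uN|<-] := ltngtP (size u) N.
- by rewrite off_level ?addr0 // ltn_eqF.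
- by rewrite off_level ?addr0 // gtn_eqF.
- by rewrite add0r.
Qed.

Lemma op_level_local g u : in_l2 g -> S g u = S (vrestr (pred1 (size u)) g) u.
Proof.
(* S is only finitely additive, so the levels beyond some N are not split off
   one by one: their total contribution is bounded by c^2 times the tail of
   ||g||^2, which is arbitrarily small. *)
move=> g_l2; have [_ _ [c [c_ge0 S_norm]]] := S_bounded.
apply/eqP; rewrite -subr_eq0; apply/eqP/sqmod_eq0/eqP.
rewrite eq_le sqmod_ge0 andbT.
apply: (le0_of_le_mul_eps (sqr_ge0 c)) => e e_gt0.
have [M g_bd] := g_l2.
have [N tail] := series_tail_small (level_sq_ge0 g) g_bd e_gt0.
pose low := fun n => (n < maxn N (size u).+1)%N.
rewrite -{1}(vrestrC low g) op_vadd /vadd; try exact: in_l2_vrestr.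
rewrite op_vrestr_lt // leq_max ltnSn orbT addrAC subrr add0r.
apply: le_trans (sqmod_le_psum _ (ltnSn _)) _.
apply: S_norm; first exact: in_l2_vrestr.
move=> m; apply: le_trans (tail _ m (leq_maxl N (size u).+1)).
by rewrite psum_vrestr big_geq_mkord; under eq_bigl => n do rewrite /= /low -leqNgt.
Qed.

Lemma level_sq_ampl k m ck f :
  (forall g, in_l2 g -> supported_in k g -> norm_le (S g) ck g) ->
  level_sq (ampl S k f) (k + m) <= ck ^+ 2 * level_sq f (k + m).
Proof.
move=> S_k; rewrite /level_sq (@big_tuple_cat _ _ k m (fun s => sqmod (ampl S k f s))).
have ampl_cat (t1 : k.-tuple 'I_d) (t2 : m.-tuple 'I_d) :
    ampl S k f (t1 ++ t2) = S (vrestr (pred1 k) (vshift t2 f)) t1.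
  rewrite ampl_apply size_cat size_tuple leq_addr take_size_cat ?size_tuple //.
  rewrite drop_size_cat ?size_tuple // op_vrestr_basis.
  by apply: eq_bigr => v _; rewrite mulrC.
under eq_bigr => t1 _ do under eq_bigr => t2 _ do rewrite ampl_cat.
rewrite exchange_big (@big_tuple_cat _ _ k m (fun s => sqmod (f s))) /=.
rewrite [in leRHS]exchange_big mulr_sumr; apply: ler_sum => t2 _ /=.
set g := vrestr (pred1 k) (vshift t2 f).
have g_k : supported_in k g := @supported_vrestr _ _ k _.
apply: le_trans (level_sq_le_psum (S g) (ltnSn k)) _.
apply: (S_k g (in_l2_supported g_k) g_k) => N.
by apply: le_trans (psum_supported_le N g_k) _; rewrite level_sq_vrestr /= eqxx.
Qed.

Lemma norm_le_ampl k ck f :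
  (forall g, in_l2 g -> supported_in k g -> norm_le (S g) ck g) ->
  norm_le (ampl S k f) ck f.
Proof.
move=> S_k M f_bd N.
apply: le_trans (ler_wpM2l (sqr_ge0 ck) (f_bd N)).
rewrite /psum mulr_sumr; apply: ler_sum => n _.
have [nk|kn] := ltnP n k; last by rewrite -(subnKC kn); apply: level_sq_ampl.
rewrite [leLHS](_ : _ = 0); first exact: mulr_ge0 (sqr_ge0 ck) (level_sq_ge0 f n).
by rewrite /level_sq big1 // => t _; rewrite ampl_apply size_tuple leqNgt nk sqmod0.
Qed.

Lemma ampl_vshift k f w : in_l2 f -> (k <= size w)%N ->
  ampl S k f w = S (vshift (drop k w) f) (take k w).
Proof.
move=> f_l2 kw; rewrite ampl_apply kw.
rewrite [RHS](op_level_local _ (in_l2_vshift (drop k w) f_l2)) size_takel //.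
by rewrite op_vrestr_basis; apply: eq_bigr => v _; rewrite mulrC.
Qed.

End BoundedOperators.

Section Defect.
Variables (R : realType) (d : nat) (T : op R d).
Implicit Types (f : vec R d) (w : word d).

Lemma sum_Rop_nil (X : 'I_d -> vec R d) : \sum_(i < d) Rop i (X i) [::] = 0.
Proof. by rewrite big1. Qed.

Lemma sum_Rop_rcons (X : 'I_d -> vec R d) w j :
  \sum_(i < d) Rop i (X i) (rcons w j) = X j w.
Proof.
rewrite (bigD1 j) //= big1 ?addr0 => [|i ij].
  by rewrite /Rop size_rcons last_rcons eqxx -cats1 take_size_cat.
by rewrite /Rop size_rcons last_rcons eq_sym (negbTE ij).
Qed.

Lemma defect_telescope f w :
  T f w = \sum_(k < (size w).+1) defect T (vshift (drop k w) f) (take k w).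
Proof.
elim/last_ind: w f => [|w j IH] f.
  by rewrite big_ord1 vshift0 /defect sum_Rop_nil subr0.
rewrite size_rcons big_ord_recr /=.
have -> : drop (size w).+1 (rcons w j) = [::] by rewrite -(size_rcons w j) drop_size.
have -> : take (size w).+1 (rcons w j) = rcons w j by rewrite -(size_rcons w j) take_size.
rewrite vshift0.
have -> : T f (rcons w j) = defect T f (rcons w j) + T (Rop_adj j f) w.
  by rewrite /defect sum_Rop_rcons subrK.
rewrite addrC IH; congr (_ + _); apply: eq_bigr => k _.
have kw : (k <= size w)%N by rewrite -ltnS.
rewrite -cats1 takel_cat // drop_cat; congr (defect T _ _).
apply: functional_extensionality => x; rewrite /vshift /Rop_adj.
case: ltnP => [_|wk]; first by rewrite -cats1 catA.
have -> : nat_of_ord k = size w by apply/eqP; rewrite eqn_leq kw wk.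
by rewrite drop_size subnn drop0 cats0 cats1.
Qed.

Lemma defect_block_diagonal :
  bounded_op T -> block_diagonal T -> block_diagonal (defect T).
Proof.
move=> T_bounded T_block n f f_l2 f_n w wn.
rewrite /defect (T_block n f f_l2 f_n w wn) sub0r.
case/lastP: w wn => [|w j] wn; first by rewrite sum_Rop_nil oppr0.
rewrite sum_Rop_rcons; case: n f_n wn => [|n] f_n wn.
  have -> : Rop_adj j f = vscale 0 f.
    apply: functional_extensionality => x; rewrite /Rop_adj /vscale mul0r.
    by apply: f_n; rewrite size_rcons.
  by rewrite op_vscale // /vscale mul0r oppr0.
have shift_n : supported_in n (Rop_adj j f).
  by move=> x xn; apply: f_n; rewrite size_rcons eqSS.
have shift_l2 : in_l2 (Rop_adj j f).
  have -> : Rop_adj j f = vshift [:: j] f.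
    by apply: functional_extensionality => x; rewrite /Rop_adj /vshift cats1.
  exact: in_l2_vshift.
by rewrite (T_block n _ shift_l2 shift_n w) ?oppr0 //; move: wn; rewrite size_rcons eqSS.
Qed.

Hypotheses (S_bounded : bounded_op (defect T)) (S_block : block_diagonal (defect T)).

Lemma sum_ampl_defect f w N : in_l2 f -> (size w < N)%N ->
  T f w = \sum_(k < N) ampl (defect T) k f w.
Proof.
move=> f_l2 wN; rewrite defect_telescope.
rewrite (big_ord_widen N (fun k => defect T (vshift (drop k w) f) (take k w)) wN).
rewrite big_mkcond /=.
apply: eq_bigr => k _; rewrite ltnS; case: leqP => kw.
  by rewrite ampl_vshift.
by rewrite ampl_apply leqNgt kw.
Qed.

Lemma sub_partial_sum_ampl N0 N1 f w : in_l2 f -> (N0 <= N1)%N -> (size w < N1)%N ->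
  op_sub T (op_sum (index_iota 0 N0) (ampl (defect T))) f w =
  \sum_(k < N1 | (N0 <= k)%N) ampl (defect T) k f w.
Proof.
move=> f_l2 N01 wN1; rewrite /op_sub op_sum_apply (sum_ampl_defect f_l2 wN1).
rewrite (bigID (fun k : 'I_N1 => (k < N0)%N)) /= big_mkord.
rewrite (big_ord_widen N1 (fun k => ampl (defect T) k f w) N01).
rewrite addrAC subrr add0r; apply: eq_bigl => k; by rewrite ltnNge negbK.
Qed.

End Defect.

Theorem proposition3p5 (R : realType) (d : nat) (hd : (2 <= d)%N) (T : op R d) :
  bounded_op T -> block_diagonal T ->
  in_classS (defect T) -> in_C T.
Proof.
move=> T_bounded T_block [S_bounded _ [c [c_ge0 [Mc c_bd] S_levels]]].
have S_block := defect_block_diagonal T_bounded T_block.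
move=> eps eps_gt0; have [N0 tail] := series_tail_small c_ge0 c_bd eps_gt0.
exists (op_sum (index_iota 0 N0) (ampl (defect T))); split.
  by apply: Lpoly_op_sum => k; apply: Lpoly_ampl.
move=> f f_l2 M f_bd N; pose N1 := (N0 + N)%N.
have M_ge0 : 0 <= M := le_trans (psum_ge0 f 0) (f_bd 0%N).
apply: le_trans (psum_mono _ (leq_addl N0 N)) _.
have err_eq w : (size w < N1)%N ->
    op_sub T (op_sum (index_iota 0 N0) (ampl (defect T))) f w =
    \sum_(k < N1 | (N0 <= k)%N) ampl (defect T) k f w.
  move=> wN1; apply: (sub_partial_sum_ampl S_bounded S_block f_l2 _ wN1).
  exact: leq_addr.
have ampl_bd (k : 'I_N1) : psum (ampl (defect T) k f) N1 <= c k ^+ 2 * M.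
  exact: (norm_le_ampl S_bounded (S_levels k) f_bd).
apply: le_trans (psum_sum_le (fun k : 'I_N1 => c_ge0 k) err_eq (fun k _ => ampl_bd k)) _.
have tail_N1 : \sum_(k < N1 | (N0 <= k)%N) c k <= eps.
  by have := tail N0 N1 (leqnn N0); rewrite big_geq_mkord.
apply: (ler_wpM2r M_ge0); rewrite lerXn2r ?nnegrE ?sumr_ge0 ?(ltW eps_gt0) //.
Qed.
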